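(* Let $p>1$. For every $x\in(0,1)$, (1) $\displaystyle \left(1+\frac{x^p}{p(1+p)}\right)x<\arcsin_p x<\frac{\pi_p}{2}\,x$; (2) $\displaystyle \left(1+\frac{1-x^p}{p(1+p)}\right)(1-x^p)^{1/p}<\arccos_p x<\frac{\pi_p}{2}\,(1-x^p)^{1/p}$; (3) $\displaystyle \frac{\bigl(p(1+p)(1+x^p)+x^p\bigr)x}{p(1+p)(1+x^p)^{1+1/p}}<\arctan_p x<2^{1/p}\,b_p\left(\frac{x^p}{1+x^p}\right)^{1/p}$.
   Context: For $p>1$ and $x\in(0,1)$: $\arcsin_p x=\int_0^x(1-t^p)^{-1/p}\,dt$, $\arctan_p x=\int_0^x(1+t^p)^{-1}\,dt$, and $\arccos_p x=\arcsin_p\bigl((1-x^p)^{1/p}\bigr)$. Further $\pi_p=\frac{2\pi}{p\sin(\pi/p)}$ (so that $\arcsin_p(1)=\pi_p/2$), and $b_p=2^{-1/p}F\left(\frac1p,\frac1p;1+\frac1p;\frac12\right)$, where $F(a,b;c;z)=\sum_{n\ge0}\frac{(a,n)(b,n)}{(c,n)}\frac{z^n}{n!}$ is the Gaussian hypergeometric function, $(a,n)=a(a+1)\cdots(a+n-1)$, $(a,0)=1$. *)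

From Stdlib Require Import Reals.
From Coquelicot Require Import Coquelicot.
Open Scope R_scope.

(* real power x^y for x >= 0, with the convention 0^y = 0 (y > 0 in all uses) *)
Definition rpow (x y : R) : R := if Rle_dec x 0 then 0 else Rpower x y.

Definition arcsin_p (p x : R) : R :=
  RInt (fun t => / rpow (1 - rpow t p) (1 / p)) 0 x.

Definition arctan_p (p x : R) : R :=
  RInt (fun t => / (1 + rpow t p)) 0 x.

Definition arccos_p (p x : R) : R :=
  arcsin_p p (rpow (1 - rpow x p) (1 / p)).

Definition pi_p (p : R) : R := 2 * PI / (p * sin (PI / p)).

Fixpoint poch (a : R) (n : nat) : R :=
  match n with
  | O => 1
  | S m => poch a m * (a + INR m)
  end.

Definition hyp2F1 (a b c z : R) : R :=
  Series (fun n => poch a n * poch b n / poch c n * z ^ n / INR (Factorial.fact n)).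

Definition b_p (p : R) : R :=
  rpow 2 (- (1 / p)) * hyp2F1 (1 / p) (1 / p) (1 + 1 / p) (1 / 2).

From Stdlib Require Import Reals Lra Lia.
From Coquelicot Require Import Coquelicot.
Open Scope R_scope.

(* With a = 1/p, both functions are hypergeometric: arcsin_p x = x F(x^p) and
   arctan_p x = x (1+x^p)^(-a) F(x^p/(1+x^p)), where F(z) = F(a,a;1+a;z) =
   sum_n (a)_n^2 / ((1+a)_n n!) z^n.  Both follow from the differential equation
   z F'(z) = a ((1-z)^(-a) - F(z)), i.e. (z^a F)' = a z^(a-1) (1-z)^(-a).
   The lower bounds are the first two terms of the positive series F, and the
   upper bound for arctan_p is monotonicity of F, since x^p/(1+x^p) < 1/2.
   For arcsin_p the bound F < pi_p/2 comes from the arctan_p representation: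
   x F(x^p) = arctan_p (x (1-x^p)^(-a)) <= int_0^oo dt/(1+t^p), and this improper
   integral is at most pi/(p sin(pi/p)).  The last estimate compares 1/(1+t^p)
   with alternating geometric sums on [0,1] and [1,oo), which produces the
   partial sums of the partial-fraction series of pi/sin(pi a); that series is
   summed with the Dirichlet kernel and the Riemann-Lebesgue lemma.  Strictness
   of F < pi_p/2 is then recovered from the strict monotonicity of F. *)

Lemma rpow_Rpower x y : 0 < x -> rpow x y = Rpower x y.
Proof. intros H; unfold rpow; destruct (Rle_dec x 0); [lra | reflexivity]. Qed.

Lemma rpow_nonpos x y : x <= 0 -> rpow x y = 0.
Proof. intros H; unfold rpow; destruct (Rle_dec x 0); [reflexivity | lra]. Qed.

Lemma Rpower_pos x y : 0 < Rpower x y.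
Proof. apply exp_pos. Qed.

Lemma Rpower_1_l y : Rpower 1 y = 1.
Proof. unfold Rpower; rewrite ln_1, Rmult_0_r; apply exp_0. Qed.

Lemma rpow_ge_0 x y : 0 <= rpow x y.
Proof. unfold rpow; destruct (Rle_dec x 0); [lra | left; apply Rpower_pos]. Qed.

Lemma rpow_pos x y : 0 < x -> 0 < rpow x y.
Proof. intros; rewrite rpow_Rpower by lra; apply Rpower_pos. Qed.

Lemma rpow_1_l y : rpow 1 y = 1.
Proof. rewrite rpow_Rpower by lra; apply Rpower_1_l. Qed.

Lemma rpow_1 x : 0 < x -> rpow x 1 = x.
Proof. intros; rewrite rpow_Rpower by lra; apply Rpower_1; lra. Qed.

Lemma rpow_plus x q r : rpow x (q + r) = rpow x q * rpow x r.
Proof.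
  destruct (Rle_dec x 0); [rewrite !rpow_nonpos by lra; ring|].
  rewrite !rpow_Rpower by lra; apply Rpower_plus.
Qed.

Lemma rpow_mult x q r : 0 < x -> rpow (rpow x q) r = rpow x (q * r).
Proof.
  intros H; rewrite (rpow_Rpower x q), rpow_Rpower, rpow_Rpower by
    (auto; apply Rpower_pos).
  apply Rpower_mult.
Qed.

Lemma rpow_inv_pow x p : 0 < x -> p <> 0 -> rpow (rpow x (1 / p)) p = x.
Proof.
  intros Hx Hp; rewrite rpow_mult by lra.
  replace (1 / p * p) with 1 by (field; lra); apply rpow_1; lra.
Qed.

Lemma rpow_pow_inv x p : 0 < x -> p <> 0 -> rpow (rpow x p) (1 / p) = x.
Proof.
  intros Hx Hp; rewrite rpow_mult by lra.
  replace (p * (1 / p)) with 1 by (field; lra); apply rpow_1; lra.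
Qed.

Lemma Rmult_rpow_pred x q : x * rpow x (q - 1) = rpow x q.
Proof.
  destruct (Rle_dec x 0).
  - rewrite !rpow_nonpos by lra; ring.
  - replace q with (1 + (q - 1)) at 2 by ring; rewrite rpow_plus, rpow_1; lra.
Qed.

Lemma rpow_le_compat x y q : 0 <= x <= y -> 0 < q -> rpow x q <= rpow y q.
Proof.
  intros Hxy Hq; destruct (Req_dec x 0) as [->|Hx].
  - rewrite rpow_nonpos by lra; apply rpow_ge_0.
  - rewrite !rpow_Rpower by lra; apply Rle_Rpower_l; lra.
Qed.

Lemma rpow_lt_compat x y q : 0 <= x < y -> 0 < q -> rpow x q < rpow y q.
Proof.
  intros Hxy Hq; destruct (Req_dec x 0) as [->|Hx].
  - rewrite rpow_nonpos by lra; apply rpow_pos; lra.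
  - rewrite !rpow_Rpower by lra; apply Rlt_Rpower_l; lra.
Qed.

Lemma rpow_lt_1 x q : 0 <= x < 1 -> 0 < q -> rpow x q < 1.
Proof. intros; rewrite <- (rpow_1_l q); apply rpow_lt_compat; lra. Qed.

Lemma rpow_in_01 x q : 0 < x < 1 -> 0 < q -> 0 < rpow x q < 1.
Proof. intros; split; [apply rpow_pos | apply rpow_lt_1]; lra. Qed.

Lemma is_derive_Rpower x y : 0 < x -> is_derive (fun s => Rpower s y) x (y * Rpower x (y - 1)).
Proof. intros; apply is_derive_Reals, derivable_pt_lim_power; auto. Qed.

Lemma is_derive_rpow_pos x q : 0 < x -> is_derive (fun s => rpow s q) x (q * rpow x (q - 1)).
Proof.
  intros Hx; apply is_derive_ext_loc with (f := fun s => Rpower s q).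
  - exists (mkposreal x Hx); intros s Hs; apply Rabs_lt_between in Hs.
    rewrite rpow_Rpower; [reflexivity | cbn in Hs; lra].
  - rewrite rpow_Rpower by lra; apply is_derive_Rpower; lra.
Qed.

(* For q > 1 the right derivative at 0 vanishes since s^q / s = s^(q-1) -> 0. *)
Lemma is_derive_rpow_0 q : 1 < q -> is_derive (fun s => rpow s q) 0 0.
Proof.
  intros Hq; apply is_derive_Reals; intros eps Heps.
  assert (Hd : 0 < Rmin 1 (Rpower eps (/ (q - 1)))) by (apply Rmin_pos; [lra | apply Rpower_pos]).
  exists (mkposreal _ Hd); intros h Hh0 Hh; cbn in Hh.
  rewrite Rplus_0_l, (rpow_nonpos 0), !Rminus_0_r by lra.
  destruct (Rle_dec h 0).
  - rewrite rpow_nonpos, Rdiv_0_l, Rabs_R0 by lra; lra.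
  - assert (Hh1 : h < Rpower eps (/ (q - 1))).
    { apply Rle_lt_trans with (Rabs h); [apply RRle_abs|].
      eapply Rlt_le_trans; [apply Hh | apply Rmin_r]. }
    rewrite rpow_Rpower by lra.
    replace (Rpower h q / h) with (Rpower h (q - 1)).
    2:{ replace q with ((q - 1) + 1) at 2 by ring.
        rewrite Rpower_plus, Rpower_1 by lra; field; lra. }
    rewrite Rabs_pos_eq by (left; apply Rpower_pos).
    replace eps with (Rpower (Rpower eps (/ (q - 1))) (q - 1)).
    2:{ rewrite Rpower_mult; replace (/ (q - 1) * (q - 1)) with 1 by (field; lra).
        apply Rpower_1; auto. }
    apply Rlt_Rpower_l; lra.
Qed.

Lemma is_derive_rpow x q : 1 < q -> is_derive (fun s => rpow s q) x (q * rpow x (q - 1)).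
Proof.
  intros Hq; destruct (Rtotal_order x 0) as [Hx|[->|Hx]].
  - apply is_derive_ext_loc with (f := fun _ => 0).
    + assert (Hx' : 0 < - x) by lra; exists (mkposreal _ Hx'); intros s Hs.
      apply Rabs_lt_between in Hs; cbn in Hs; rewrite rpow_nonpos; lra.
    + rewrite (rpow_nonpos x), Rmult_0_r by lra; apply (is_derive_const (K := R_AbsRing) (0 : R)).
  - rewrite (rpow_nonpos 0), Rmult_0_r by lra; apply is_derive_rpow_0; lra.
  - apply is_derive_rpow_pos; lra.
Qed.

Lemma is_derive_eq (f : R -> R) (x l l' : R) : is_derive f x l -> l = l' -> is_derive f x l'.
Proof. intros H ->; auto. Qed.

Lemma is_derive_mult_R (f g : R -> R) x df dg :
  is_derive f x df -> is_derive g x dg ->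
  is_derive (fun t => f t * g t) x (df * g x + f x * dg).
Proof. intros H1 H2; apply (is_derive_mult f g x df dg H1 H2); intros; apply Rmult_comm. Qed.

Lemma is_derive_comp_R (f g : R -> R) x df dg :
  is_derive f (g x) df -> is_derive g x dg -> is_derive (fun t => f (g t)) x (df * dg).
Proof. intros H1 H2; rewrite Rmult_comm; apply (is_derive_comp f g x df dg H1 H2). Qed.

Lemma is_derive_plus_R (f g : R -> R) x df dg :
  is_derive f x df -> is_derive g x dg -> is_derive (fun t => f t + g t) x (df + dg).
Proof. intros H1 H2; apply (is_derive_plus f g x df dg H1 H2). Qed.

Lemma is_derive_id_R x : is_derive (fun t : R => t) x 1.
Proof. apply (is_derive_id (K := R_AbsRing)). Qed.

Lemma is_derive_const_R (c : R) x : is_derive (fun _ : R => c) x 0.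
Proof. apply (is_derive_const (K := R_AbsRing) c). Qed.

Lemma continuous_of_ex_derive (f : R -> R) x : ex_derive f x -> continuous f x.
Proof. apply (ex_derive_continuous (K := R_AbsRing) (V := R_NormedModule)). Qed.

Lemma continuous_of_is_derive (f : R -> R) x l : is_derive f x l -> continuous f x.
Proof. intros H; apply continuous_of_ex_derive; eexists; eauto. Qed.

Lemma ex_RInt_of_continuous (f : R -> R) a b :
  a <= b -> (forall x, a <= x <= b -> continuous f x) -> ex_RInt f a b.
Proof.
  intros Hab H; apply (ex_RInt_continuous (V := R_CompleteNormedModule)).
  rewrite Rmin_left, Rmax_right by lra; auto.
Qed.

Lemma RInt_of_is_derive (f F : R -> R) a b : a <= b ->
  (forall x, a <= x <= b -> is_derive F x (f x)) ->
  (forall x, a <= x <= b -> continuous f x) -> (RInt f a b : R) = F b - F a.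
Proof.
  intros Hab HD HC; apply is_RInt_unique.
  apply (is_RInt_derive F f a b); rewrite Rmin_left, Rmax_right by lra; auto.
Qed.

Lemma eq_of_is_derive_0 (f : R -> R) a b :
  a <= b -> (forall x, a <= x <= b -> is_derive f x 0) -> f b = f a.
Proof.
  intros Hab H.
  assert (E := RInt_of_is_derive (fun _ => 0) f a b Hab H (fun x _ => continuous_const 0 x)).
  rewrite RInt_const, Rmult_0_r in E; lra.
Qed.

Lemma RInt_le_of_is_derive (f g G : R -> R) a b : a <= b ->
  (forall t, a <= t <= b -> is_derive G t (g t)) ->
  (forall t, a <= t <= b -> continuous g t) ->
  (forall t, a <= t <= b -> continuous f t) ->
  (forall t, a < t < b -> f t <= g t) -> RInt f a b <= G b - G a.
Proof.
  intros Hab HD HC Hf Hle; rewrite <- (RInt_of_is_derive g G a b) by auto.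
  apply RInt_le; auto; apply ex_RInt_of_continuous; auto.
Qed.

(** * The series (1-z)^(-a) and F(a,a;1+a;z) *)

Definition bin_coef (a : R) (n : nat) : R := poch a n / INR (Factorial.fact n).
Definition hyp_coef (a : R) (n : nat) : R :=
  poch a n * poch a n / poch (1 + a) n / INR (Factorial.fact n).

Definition bin_series (a z : R) : R := PSeries (bin_coef a) z.
Definition hyp_series (a z : R) : R := PSeries (hyp_coef a) z.

Lemma poch_pos a n : 0 < a -> 0 < poch a n.
Proof.
  intros Ha; induction n as [|n IH]; simpl; [lra|].
  apply Rmult_lt_0_compat; auto; pose proof (pos_INR n); lra.
Qed.

Lemma poch_shift a n : poch (1 + a) n * a = poch a n * (a + INR n).
Proof.
  induction n as [|n IH]; cbn [poch]; [simpl; ring|].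
  rewrite S_INR; transitivity (poch (1 + a) n * a * (1 + a + INR n)); [ring|].
  rewrite IH; ring.
Qed.

Lemma hyp2F1_hyp_series a z : 0 < a -> hyp2F1 a a (1 + a) z = hyp_series a z.
Proof.
  intros Ha; unfold hyp2F1, hyp_series, PSeries; apply Series_ext; intros n.
  unfold hyp_coef; pose proof (INR_fact_lt_0 n); pose proof (poch_pos (1 + a) n ltac:(lra)).
  field; lra.
Qed.

Lemma bin_coef_0 a : bin_coef a 0 = 1.
Proof. unfold bin_coef; simpl; field. Qed.

Lemma bin_coef_S a n : bin_coef a (S n) = bin_coef a n * (a + INR n) / INR (S n).
Proof.
  unfold bin_coef; cbn [poch]; rewrite fact_simpl, mult_INR.
  pose proof (INR_fact_lt_0 n); assert (0 < INR (S n)) by (apply lt_0_INR; lia).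
  field; lra.
Qed.

Lemma hyp_coef_bin_coef a n : 0 < a -> hyp_coef a n = bin_coef a n * a / (a + INR n).
Proof.
  intros Ha; unfold hyp_coef, bin_coef; pose proof (pos_INR n); pose proof (INR_fact_lt_0 n).
  pose proof (poch_pos (1 + a) n ltac:(lra)).
  assert (E : poch a n = poch (1 + a) n * a / (a + INR n)) by (rewrite poch_shift; field; lra).
  rewrite E at 2; field; lra.
Qed.

Lemma hyp_coef_rel a n : 0 < a -> hyp_coef a n + / a * (INR n * hyp_coef a n) = bin_coef a n.
Proof. intros Ha; rewrite hyp_coef_bin_coef by lra; pose proof (pos_INR n); field; lra. Qed.

Lemma hyp_coef_0 a : 0 < a -> hyp_coef a 0 = 1.
Proof. intros; rewrite hyp_coef_bin_coef, bin_coef_0 by lra; simpl; field; lra. Qed.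

Lemma hyp_coef_1 a : 0 < a -> hyp_coef a 1 = a * a / (1 + a).
Proof.
  intros; rewrite hyp_coef_bin_coef, (bin_coef_S a 0), bin_coef_0 by lra; simpl; field; lra.
Qed.

Lemma mult_frac_in_01 x y z : 0 < x <= 1 -> 0 < y <= z -> 0 < x * y / z <= 1.
Proof.
  intros Hx Hy; split; [apply Rdiv_lt_0_compat; nra|].
  apply Rmult_le_reg_r with z; [lra|]; unfold Rdiv; rewrite Rmult_assoc, Rinv_l by lra; nra.
Qed.

Lemma bin_coef_in_01 a n : 0 < a < 1 -> 0 < bin_coef a n <= 1.
Proof.
  intros Ha; induction n as [|n IH]; [rewrite bin_coef_0; lra|].
  rewrite bin_coef_S, S_INR; pose proof (pos_INR n); apply mult_frac_in_01; lra.
Qed.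

Lemma hyp_coef_in_01 a n : 0 < a < 1 -> 0 < hyp_coef a n <= 1.
Proof.
  intros Ha; rewrite hyp_coef_bin_coef by lra; pose proof (pos_INR n).
  pose proof (bin_coef_in_01 a n Ha).
  apply mult_frac_in_01; lra.
Qed.

Lemma CV_radius_gt_of_bounded (c : nat -> R) z :
  (forall n, Rabs (c n) <= 1) -> Rabs z < 1 -> Rbar_lt (Rabs z) (CV_radius c).
Proof.
  intros Hc Hz; destruct (CV_radius_bounded c) as [Hub _].
  eapply Rbar_lt_le_trans; [|apply Hub; exists 1; intros n; rewrite pow1, Rmult_1_r; auto].
  exact Hz.
Qed.

Lemma PSeries_PS_derive_mult (c : nat -> R) z :
  z * PSeries (PS_derive c) z = PSeries (fun n => INR n * c n) z.
Proof.
  rewrite <- PSeries_incr_1; apply PSeries_ext.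
  intros [|n]; [simpl; rewrite Rmult_0_l|]; reflexivity.
Qed.

Lemma CV_radius_INR_mult (c : nat -> R) : CV_radius (fun n => INR n * c n) = CV_radius c.
Proof.
  rewrite <- (CV_radius_derive c), <- (CV_radius_incr_1 (PS_derive c)).
  apply CV_radius_ext; intros [|n]; [simpl; rewrite Rmult_0_l | ]; reflexivity.
Qed.

Lemma Series_ge_0 (u : nat -> R) : (forall n, 0 <= u n) -> ex_series u -> 0 <= Series u.
Proof.
  intros H Hex; assert (E := Series_le (fun n => 0 * u n) u).
  rewrite Series_scal_l, Rmult_0_l in E; apply E; auto.
  intros n; rewrite Rmult_0_l; split; [lra | auto].
Qed.

Section HypSeries.
Variable a : R.
Hypothesis Ha : 0 < a < 1.

Let Rabs_hyp_coef n : Rabs (hyp_coef a n) <= 1.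
Proof. destruct (hyp_coef_in_01 a n Ha); rewrite Rabs_pos_eq; lra. Qed.

Let Rabs_bin_coef n : Rabs (bin_coef a n) <= 1.
Proof. destruct (bin_coef_in_01 a n Ha); rewrite Rabs_pos_eq; lra. Qed.

Lemma ex_pseries_hyp_coef z : Rabs z < 1 -> ex_pseries (hyp_coef a) z.
Proof. intros; apply CV_radius_inside, CV_radius_gt_of_bounded; auto. Qed.

Lemma is_derive_hyp_series z : Rabs z < 1 ->
  is_derive (hyp_series a) z (PSeries (PS_derive (hyp_coef a)) z).
Proof. intros; apply is_derive_PSeries, CV_radius_gt_of_bounded; auto. Qed.

Lemma is_derive_bin_series z : Rabs z < 1 ->
  is_derive (bin_series a) z (PSeries (PS_derive (bin_coef a)) z).
Proof. intros; apply is_derive_PSeries, CV_radius_gt_of_bounded; auto. Qed.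

Lemma hyp_series_derive_bin_series z : Rabs z < 1 ->
  hyp_series a z + / a * (z * PSeries (PS_derive (hyp_coef a)) z) = bin_series a z.
Proof.
  intros Hz; rewrite PSeries_PS_derive_mult, <- (PSeries_scal (/ a)).
  unfold hyp_series; rewrite <- PSeries_plus.
  - apply PSeries_ext; intros n; apply hyp_coef_rel; lra.
  - apply ex_pseries_hyp_coef; auto.
  - apply ex_pseries_scal; [apply Rmult_comm|].
    apply CV_radius_inside; rewrite CV_radius_INR_mult; apply CV_radius_gt_of_bounded; auto.
Qed.

Lemma bin_series_ode z : Rabs z < 1 ->
  PSeries (PS_derive (bin_coef a)) z - z * PSeries (PS_derive (bin_coef a)) z = a * bin_series a z.
Proof.
  intros Hz; rewrite PSeries_PS_derive_mult, <- PSeries_minus.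
  - unfold bin_series; rewrite <- PSeries_scal; apply PSeries_ext; intros n.
    unfold PS_minus, PS_scal, PS_derive; rewrite bin_coef_S, S_INR.
    pose proof (pos_INR n); unfold plus, opp, scal; simpl; unfold mult; simpl; field; lra.
  - apply CV_radius_inside; rewrite CV_radius_derive; apply CV_radius_gt_of_bounded; auto.
  - apply CV_radius_inside; rewrite CV_radius_INR_mult; apply CV_radius_gt_of_bounded; auto.
Qed.

(* Its product with (1-z)^a has derivative (1-z)^(a-1) ((1-z) G' - a G) = 0. *)
Lemma bin_series_Rpower z : 0 <= z < 1 -> bin_series a z = Rpower (1 - z) (- a).
Proof.
  intros Hz.
  assert (H : bin_series a z * Rpower (1 - z) a = bin_series a 0 * Rpower (1 - 0) a).
  { apply (eq_of_is_derive_0 (fun s => bin_series a s * Rpower (1 - s) a)); [lra|].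
    intros s Hs; assert (Hs1 : Rabs s < 1) by (rewrite Rabs_pos_eq; lra).
    eapply is_derive_eq.
    - apply is_derive_mult_R; [apply is_derive_bin_series; auto|].
      apply (is_derive_comp_R (fun u => Rpower u a) (fun s => 1 - s)).
      + apply is_derive_Rpower; lra.
      + apply (is_derive_minus (K := R_AbsRing) (fun _ => 1) (fun s => s) s 0 1).
        * apply is_derive_const_R.
        * apply is_derive_id_R.
    - pose proof (bin_series_ode s Hs1) as HE; unfold minus, plus, opp; simpl.
      replace (Rpower (1 - s) a) with ((1 - s) * Rpower (1 - s) (a - 1)).
      2:{ replace a with ((a - 1) + 1) at 2 by ring; rewrite Rpower_plus, Rpower_1 by lra; ring. }
      transitivity ((PSeries (PS_derive (bin_coef a)) s - s * PSeries (PS_derive (bin_coef a)) s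
        - a * bin_series a s) * Rpower (1 - s) (a - 1)); [ring|].
      rewrite HE; ring. }
  unfold bin_series in H; rewrite PSeries_0, bin_coef_0, Rminus_0_r, Rpower_1_l in H.
  rewrite Rpower_Ropp; apply Rmult_eq_reg_r with (Rpower (1 - z) a);
    [|apply Rgt_not_eq, Rpower_pos].
  unfold bin_series; rewrite H, Rinv_l; [ring | apply Rgt_not_eq, Rpower_pos].
Qed.

Lemma hyp_series_ode z : 0 <= z < 1 ->
  z * PSeries (PS_derive (hyp_coef a)) z = a * (Rpower (1 - z) (- a) - hyp_series a z).
Proof.
  intros Hz; assert (Hz' : Rabs z < 1) by (rewrite Rabs_pos_eq; lra).
  rewrite <- bin_series_Rpower, <- (hyp_series_derive_bin_series z Hz') by auto.
  field; lra.
Qed.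

Lemma hyp_series_gt_linear z : 0 < z < 1 -> 1 + a * a / (1 + a) * z < hyp_series a z.
Proof.
  intros Hz; assert (Hz' : Rabs z < 1) by (rewrite Rabs_pos_eq; lra).
  pose proof (ex_pseries_hyp_coef z Hz') as Hex; apply ex_pseries_R in Hex.
  unfold hyp_series, PSeries.
  do 3 (rewrite (Series_incr_1 _ Hex); apply ex_series_incr_1 in Hex).
  assert (H3 : 0 <= Series (fun k => hyp_coef a (S (S (S k))) * z ^ S (S (S k)))).
  { apply Series_ge_0; auto; intros n.
    apply Rmult_le_pos; [apply Rlt_le, hyp_coef_in_01 | apply pow_le]; lra. }
  rewrite hyp_coef_0, hyp_coef_1 by lra.
  pose proof (hyp_coef_in_01 a 2 Ha); simpl pow in *.
  assert (0 < hyp_coef a 2 * (z * (z * 1))) by (apply Rmult_lt_0_compat; nra).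
  lra.
Qed.

Lemma hyp_series_lt_compat z1 z2 : 0 <= z1 < z2 -> z2 < 1 -> hyp_series a z1 < hyp_series a z2.
Proof.
  intros H1 H2.
  pose proof (ex_pseries_hyp_coef z1 ltac:(rewrite Rabs_pos_eq; lra)) as E1.
  pose proof (ex_pseries_hyp_coef z2 ltac:(rewrite Rabs_pos_eq; lra)) as E2.
  apply ex_pseries_R in E1; apply ex_pseries_R in E2.
  apply Rlt_0_minus; unfold hyp_series, PSeries; rewrite <- Series_minus by auto.
  assert (Hex : ex_series (fun n => hyp_coef a n * z2 ^ n - hyp_coef a n * z1 ^ n))
    by apply (ex_series_minus _ _ E2 E1).
  do 2 (rewrite (Series_incr_1 _ Hex); apply ex_series_incr_1 in Hex).
  assert (H3 : 0 <= Series (fun k => hyp_coef a (S (S k)) * z2 ^ S (S k)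
                                    - hyp_coef a (S (S k)) * z1 ^ S (S k))).
  { apply Series_ge_0; auto; intros n; rewrite <- Rmult_minus_distr_l.
    apply Rmult_le_pos; [apply Rlt_le, hyp_coef_in_01; auto|].
    apply Rge_le, Rge_minus, Rle_ge, pow_incr; lra. }
  pose proof (hyp_coef_in_01 a 1 Ha); simpl pow in *.
  assert (0 < hyp_coef a 1 * (z2 * 1) - hyp_coef a 1 * (z1 * 1)) by nra.
  lra.
Qed.

End HypSeries.

(** * Hypergeometric representations of arcsin_p and arctan_p *)

Section Representations.
Variable p : R.
Hypothesis Hp : 1 < p.

Let a := 1 / p.

Lemma inv_p_in_01 : 0 < a < 1.
Proof.
  unfold a; split; [apply Rdiv_lt_0_compat; lra|].
  apply Rmult_lt_reg_r with p; [lra|]; field_simplify; lra.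
Qed.

Let Ha := inv_p_in_01.

Lemma is_derive_arcsin_primitive t : 0 <= t -> rpow t p < 1 ->
  is_derive (fun s => s * hyp_series a (rpow s p)) t (Rpower (1 - rpow t p) (- a)).
Proof.
  intros Ht Htp; pose proof (rpow_ge_0 t p).
  eapply is_derive_eq.
  - apply is_derive_mult_R; [apply is_derive_id_R|].
    apply (is_derive_comp_R (hyp_series a) (fun s => rpow s p)).
    + apply is_derive_hyp_series; [|rewrite Rabs_pos_eq]; lra.
    + apply is_derive_rpow; lra.
  - pose proof (hyp_series_ode a Ha (rpow t p) ltac:(lra)) as Hode.
    transitivity (hyp_series a (rpow t p)
      + p * (t * rpow t (p - 1) * PSeries (PS_derive (hyp_coef a)) (rpow t p))); [ring|].
    rewrite Rmult_rpow_pred, Hode; unfold a; field; lra.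
Qed.

Lemma arcsin_p_hyp_series x : 0 <= x < 1 -> arcsin_p p x = x * hyp_series a (rpow x p).
Proof.
  intros Hx.
  assert (Hu : forall t, 0 <= t <= x -> 0 <= rpow t p < 1).
  { intros t Ht; split; [apply rpow_ge_0|].
    apply Rle_lt_trans with (rpow x p); [apply rpow_le_compat | apply rpow_lt_1]; lra. }
  unfold arcsin_p.
  rewrite (RInt_ext _ (fun t => Rpower (1 - rpow t p) (- a))).
  - rewrite (RInt_of_is_derive _ (fun s => s * hyp_series a (rpow s p))); [ring | lra | |].
    + intros t Ht; apply is_derive_arcsin_primitive; [lra | apply Hu; lra].
    + intros t Ht; destruct (Hu t Ht).
      apply (continuous_of_is_derive _ _ (- a * Rpower (1 - rpow t p) (- a - 1)
        * (0 - p * rpow t (p - 1)))).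
      apply (is_derive_comp_R (fun v => Rpower v (- a)) (fun s => 1 - rpow s p)).
      * apply is_derive_Rpower; lra.
      * apply (is_derive_minus (K := R_AbsRing) (fun _ => 1) (fun s => rpow s p));
          [apply is_derive_const_R | apply is_derive_rpow; lra].
  - intros t Ht; rewrite Rmin_left, Rmax_right in Ht by lra; destruct (Hu t ltac:(lra)).
    rewrite rpow_Rpower, Rpower_Ropp by lra; reflexivity.
Qed.

Let is_derive_frac v : 0 <= v -> is_derive (fun s => s / (1 + s)) v (/ ((1 + v) * (1 + v))).
Proof. intros; auto_derive; [lra | field; lra]. Qed.

Lemma is_derive_arctan_primitive t : 0 <= t ->
  is_derive (fun s => s * Rpower (1 + rpow s p) (- a) * hyp_series a (rpow s p / (1 + rpow s p)))
    t (/ (1 + rpow t p)).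
Proof.
  intros Ht; pose proof (rpow_ge_0 t p).
  assert (Hz : 0 <= rpow t p / (1 + rpow t p) < 1).
  { split; [apply Rdiv_le_0_compat; lra|].
    apply Rmult_lt_reg_r with (1 + rpow t p); [lra | field_simplify; lra]. }
  assert (Hz' : Rabs (rpow t p / (1 + rpow t p)) < 1) by (rewrite Rabs_pos_eq; lra).
  eapply is_derive_eq.
  - apply is_derive_mult_R; [apply is_derive_mult_R|].
    + apply is_derive_id_R.
    + apply (is_derive_comp_R (fun v => Rpower v (- a)) (fun s => 1 + rpow s p)).
      * apply is_derive_Rpower; lra.
      * apply is_derive_plus_R; [apply is_derive_const_R | apply is_derive_rpow; lra].
    + apply (is_derive_comp_R (hyp_series a) (fun s => rpow s p / (1 + rpow s p))).
      * exact (is_derive_hyp_series a Ha _ Hz').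
      * apply (is_derive_comp_R (fun v => v / (1 + v)) (fun s => rpow s p));
          [apply is_derive_frac; lra | apply is_derive_rpow; lra].
  - cbv beta; pose proof (hyp_series_ode a Ha _ Hz) as Hode.
    pose proof (Rmult_rpow_pred t p) as Hpred.
    set (U := rpow t p) in *; set (R1 := rpow t (p - 1)) in *.
    set (F1 := PSeries (PS_derive (hyp_coef a)) (U / (1 + U))) in *.
    set (W := Rpower (1 + U) (- a)).
    assert (HW : 0 < W) by apply Rpower_pos.
    assert (HW1 : Rpower (1 + U) (- a - 1) = W / (1 + U)).
    { unfold W, Rminus; rewrite Rpower_plus, (Rpower_Ropp _ 1), Rpower_1 by lra; field; lra. }
    assert (HWinv : Rpower (1 - U / (1 + U)) (- a) = / W).
    { replace (1 - U / (1 + U)) with (/ (1 + U)) by (field; lra).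
      unfold W, Rpower; rewrite ln_Rinv, <- exp_Ropp by lra; f_equal; ring. }
    assert (HF : hyp_series a (U / (1 + U)) = / W - p * (U / (1 + U) * F1)).
    { rewrite Hode, HWinv; unfold a; field; lra. }
    rewrite HW1, HF; clearbody U R1 W F1; subst U; unfold a; field; nra.
Qed.

Lemma continuous_arctan_integrand t : continuous (fun s => / (1 + rpow s p)) t.
Proof.
  pose proof (rpow_ge_0 t p).
  apply (continuous_of_is_derive _ _ (- / ((1 + rpow t p) * (1 + rpow t p))
    * (0 + p * rpow t (p - 1)))).
  apply (is_derive_comp_R (fun v => / v) (fun s => 1 + rpow s p)).
  - auto_derive; [lra | field; lra].
  - apply is_derive_plus_R; [apply is_derive_const_R | apply is_derive_rpow; lra].
Qed.

Lemma arctan_p_hyp_series x : 0 <= x ->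
  arctan_p p x = x * Rpower (1 + rpow x p) (- a) * hyp_series a (rpow x p / (1 + rpow x p)).
Proof.
  intros Hx; unfold arctan_p.
  rewrite (RInt_of_is_derive _ (fun s => s * Rpower (1 + rpow s p) (- a)
                                         * hyp_series a (rpow s p / (1 + rpow s p)))); auto.
  - ring.
  - intros t Ht; apply is_derive_arctan_primitive; lra.
  - intros t _; apply continuous_arctan_integrand.
Qed.

End Representations.

(** * Alternating geometric bounds for the integral of 1/(1+t^p) *)

Lemma is_derive_sum_f_R0 (f df : nat -> R -> R) m t :
  (forall n, (n <= m)%nat -> is_derive (f n) t (df n t)) ->
  is_derive (fun s => sum_f_R0 (fun n => f n s) m) t (sum_f_R0 (fun n => df n t) m).
Proof.
  induction m as [|m IH]; intros H; simpl; [apply H; lia|].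
  apply is_derive_plus_R; [apply IH; intros; apply H | apply H]; lia.
Qed.

Lemma ex_derive_sum_f_R0 (f : nat -> R -> R) m t :
  (forall n, (n <= m)%nat -> ex_derive (f n) t) ->
  ex_derive (fun s => sum_f_R0 (fun n => f n s) m) t.
Proof.
  intros H; eexists; apply (is_derive_sum_f_R0 f (fun n s => Derive (f n) s)).
  intros n Hn; apply Derive_correct; auto.
Qed.

Lemma alt_geom_sum u m :
  (1 + u) * sum_f_R0 (fun n => (-1) ^ n * u ^ n) m = 1 + (-1) ^ m * u ^ S m.
Proof. induction m as [|m IH]; simpl; [ring|]; rewrite Rmult_plus_distr_l, IH; simpl; ring. Qed.

Lemma inv_1_plus_le_alt_geom_sum u K : 0 <= u ->
  / (1 + u) <= sum_f_R0 (fun n => (-1) ^ n * u ^ n) (2 * K).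
Proof.
  intros Hu; pose proof (alt_geom_sum u (2 * K)) as G; rewrite pow_1_even in G.
  pose proof (pow_le u (S (2 * K)) Hu).
  apply Rmult_le_reg_l with (1 + u); [lra|]; rewrite G, Rinv_r; lra.
Qed.

Lemma alt_sum_ge_last (e : nat -> R) K : (forall n, 0 <= e (S n) <= e n) ->
  e (2 * K)%nat <= sum_f_R0 (fun n => (-1) ^ n * e n) (2 * K).
Proof.
  intros He; induction K as [|K IH]; [simpl; lra|].
  replace (2 * S K)%nat with (S (S (2 * K))) by lia; rewrite !tech5.
  replace ((-1) ^ S (S (2 * K))) with ((-1) ^ (2 * S K)) by (f_equal; lia).
  rewrite pow_1_even, pow_1_odd.
  pose proof (He (2 * K)%nat); pose proof (He (S (2 * K))); lra.
Qed.

Definition alt_sum_01 (p : R) (K : nat) : R :=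
  sum_f_R0 (fun n => (-1) ^ n / (INR n * p + 1)) (2 * K).
Definition alt_sum_1oo (p : R) (K : nat) : R :=
  sum_f_R0 (fun n => (-1) ^ n / (INR n * p + p - 1)) (2 * K).

Section AltSums.
Variable p : R.
Hypothesis Hp : 1 < p.

Lemma alt_sum_1oo_ge_0 K : 0 <= alt_sum_1oo p K.
Proof.
  unfold alt_sum_1oo.
  eapply Rle_trans; [|apply (alt_sum_ge_last (fun n => / (INR n * p + p - 1)))].
  - left; apply Rinv_0_lt_compat; pose proof (pos_INR (2 * K)); nra.
  - intros n; pose proof (pos_INR n); rewrite S_INR; split.
    + left; apply Rinv_0_lt_compat; nra.
    + apply Rinv_le_contravar; nra.
Qed.

(* 1/(1+t^p) <= sum_(n<=2K) (-1)^n t^(np), integrated term by term over [0,1]. *)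
Lemma arctan_p_1_le_alt_sum K : arctan_p p 1 <= alt_sum_01 p K.
Proof.
  set (Phi := fun s => sum_f_R0 (fun n => (-1) ^ n / (INR n * p + 1) * (s * rpow s p ^ n)) (2 * K)).
  set (g := fun s => sum_f_R0 (fun n => (-1) ^ n * rpow s p ^ n) (2 * K)).
  apply Rle_trans with (Phi 1 - Phi 0).
  - apply (RInt_le_of_is_derive _ g Phi 0 1); [lra | | | |].
    + intros t Ht; unfold Phi, g.
      apply (is_derive_sum_f_R0 (fun n s => (-1) ^ n / (INR n * p + 1) * (s * rpow s p ^ n))
                                (fun n s => (-1) ^ n * rpow s p ^ n)).
      intros n _; pose proof (pos_INR n); eapply is_derive_eq.
      * apply (is_derive_scal (fun s => s * rpow s p ^ n)), is_derive_mult_R;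
          [apply is_derive_id_R | apply is_derive_pow, is_derive_rpow; lra].
      * destruct n as [|n]; [simpl; field|].
        simpl pred; transitivity ((-1) ^ S n / (INR (S n) * p + 1)
          * (rpow t p ^ S n + INR (S n) * p * (t * rpow t (p - 1)) * rpow t p ^ n)); [ring|].
        rewrite Rmult_rpow_pred; simpl pow; field; nra.
    + intros t Ht; apply continuous_of_ex_derive.
      apply (ex_derive_sum_f_R0 (fun n s => (-1) ^ n * rpow s p ^ n)); intros n _; eexists.
      apply (is_derive_scal (fun s => rpow s p ^ n)), is_derive_pow, is_derive_rpow; lra.
    + intros t _; apply (continuous_arctan_integrand p Hp).
    + intros t _; apply inv_1_plus_le_alt_geom_sum, rpow_ge_0.
  - unfold Phi, alt_sum_01; rewrite rpow_1_l, <- minus_sum; right; apply sum_eq; intros n _.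
    rewrite pow1; ring.
Qed.

(* On [1,Y] write 1/(1+t^p) = v/(1+v) with v = t^(-p) and expand in powers of v. *)
Lemma RInt_1_le_alt_sum K Y : 1 <= Y -> RInt (fun t => / (1 + rpow t p)) 1 Y <= alt_sum_1oo p K.
Proof.
  intros HY; set (d := fun n : nat => INR n * p + p - 1).
  assert (Hd : forall n, p - 1 <= d n) by (intros n; unfold d; pose proof (pos_INR n); nra).
  set (Psi := fun s => sum_f_R0 (fun n => (-1) ^ n * - / d n * Rpower s (- d n)) (2 * K)).
  set (g := fun s => sum_f_R0 (fun n => (-1) ^ n * Rpower s (- d n - 1)) (2 * K)).
  apply Rle_trans with (Psi Y - Psi 1).
  - apply (RInt_le_of_is_derive _ g Psi 1 Y HY).
    + intros t Ht; unfold Psi, g.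
      apply (is_derive_sum_f_R0 (fun n s => (-1) ^ n * - / d n * Rpower s (- d n))
                                (fun n s => (-1) ^ n * Rpower s (- d n - 1))).
      intros n _; pose proof (Hd n); eapply is_derive_eq.
      * apply (is_derive_scal (fun s => Rpower s (- d n))), is_derive_Rpower; lra.
      * field; lra.
    + intros t Ht; apply continuous_of_ex_derive.
      apply (ex_derive_sum_f_R0 (fun n s => (-1) ^ n * Rpower s (- d n - 1))); intros n _; eexists.
      apply (is_derive_scal (fun s => Rpower s (- d n - 1))), is_derive_Rpower; lra.
    + intros t _; apply (continuous_arctan_integrand p Hp).
    + intros t Ht; unfold g; set (v := Rpower t (- p)).
      assert (Hv : 0 < v) by apply Rpower_pos.
      assert (E : forall n, (-1) ^ n * Rpower t (- d n - 1) = (-1) ^ n * v ^ n * v).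
      { intros n; unfold d, v; rewrite <- (Rpower_pow n (Rpower t (- p))) by apply Rpower_pos.
        rewrite Rpower_mult, Rmult_assoc, <- Rpower_plus; f_equal; f_equal; ring. }
      rewrite (sum_eq _ _ _ (fun n _ => E n)), <- scal_sum, rpow_Rpower by lra.
      replace (Rpower t p) with (/ v) by (unfold v; rewrite Rpower_Ropp, Rinv_inv; reflexivity).
      replace (/ (1 + / v)) with (v * / (1 + v)) by (field; lra).
      apply Rmult_le_compat_l; [lra | apply inv_1_plus_le_alt_geom_sum; lra].
  - assert (HPsiY : 0 <= sum_f_R0 (fun n => (-1) ^ n * (Rpower Y (- d n) / d n)) (2 * K)).
    { eapply Rle_trans; [|apply (alt_sum_ge_last (fun n => Rpower Y (- d n) / d n))].
      - pose proof (Hd (2 * K)%nat); apply Rdiv_le_0_compat; [left; apply Rpower_pos | lra].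
      - intros n; pose proof (Hd n); pose proof (Hd (S n)).
        assert (Hds : d (S n) = d n + p) by (unfold d; rewrite S_INR; ring).
        split; [apply Rdiv_le_0_compat; [left; apply Rpower_pos | lra]|].
        apply Rmult_le_compat; [left; apply Rpower_pos | left; apply Rinv_0_lt_compat; lra | |].
        + apply Rle_Rpower; lra.
        + apply Rinv_le_contravar; lra. }
    enough (Psi Y - Psi 1 = alt_sum_1oo p K
      - sum_f_R0 (fun n => (-1) ^ n * (Rpower Y (- d n) / d n)) (2 * K)) by lra.
    unfold Psi, alt_sum_1oo; rewrite <- !minus_sum; apply sum_eq; intros n _.
    pose proof (Hd n); rewrite Rpower_1_l; unfold d in *; field; lra.
Qed.

Lemma arctan_p_le_alt_sums K Y : 0 <= Y -> arctan_p p Y <= alt_sum_01 p K + alt_sum_1oo p K.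
Proof.
  intros HY; pose proof (alt_sum_1oo_ge_0 K); pose proof (arctan_p_1_le_alt_sum K).
  assert (Hex : forall u v, ex_RInt (fun t => / (1 + rpow t p)) u v).
  { intros; apply (ex_RInt_continuous (V := R_CompleteNormedModule)).
    intros; apply (continuous_arctan_integrand p Hp). }
  unfold arctan_p in *; destruct (Rle_dec 1 Y) as [H1|H1].
  - rewrite <- (RInt_Chasles (V := R_CompleteNormedModule) _ 0 1 Y) by apply Hex.
    pose proof (RInt_1_le_alt_sum K Y H1); unfold plus; simpl; lra.
  - rewrite <- (RInt_Chasles (V := R_CompleteNormedModule) _ 0 Y 1) in H0 by apply Hex.
    unfold plus in H0; simpl in H0.
    assert (0 <= RInt (fun t => / (1 + rpow t p)) Y 1).
    { apply RInt_ge_0; [lra | apply Hex|].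
      intros t _; left; apply Rinv_0_lt_compat; pose proof (rpow_ge_0 t p); lra. }
    lra.
Qed.

End AltSums.

(** * The partial fraction expansion of pi / sin (pi a) *)

Fixpoint dirichlet (N : nat) (x : R) : R :=
  match N with O => 1 / 2 | S n => dirichlet n x + cos (INR (S n) * x) end.

(* Partial sums of pi / sin (pi a) = 1/a + sum_(n>=1) (-1)^n 2a / (a^2 - n^2). *)
Fixpoint cosec_partial_sum (a : R) (N : nat) : R :=
  match N with
  | O => 1 / a
  | S n => cosec_partial_sum a n + (-1) ^ S n * (2 * a / (a * a - INR (S n) * INR (S n)))
  end.

Lemma dirichlet_sin N x : 2 * sin (x / 2) * dirichlet N x = sin ((INR N + 1 / 2) * x).
Proof.
  induction N as [|N IH].
  { replace ((INR 0 + 1 / 2) * x) with (x / 2) by (simpl; field); simpl; field. }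
  cbn [dirichlet]; rewrite Rmult_plus_distr_l, IH.
  replace ((INR (S N) + 1 / 2) * x) with (INR (S N) * x + x / 2) by (rewrite S_INR; field).
  replace ((INR N + 1 / 2) * x) with (INR (S N) * x - x / 2) by (rewrite S_INR; field).
  rewrite sin_plus, sin_minus; ring.
Qed.

Lemma sin_INR_PI n : sin (INR n * PI) = 0.
Proof.
  induction n as [|n IH]; [simpl; rewrite Rmult_0_l; apply sin_0|].
  rewrite S_INR, Rmult_plus_distr_r, Rmult_1_l, sin_plus, IH, sin_PI; ring.
Qed.

Lemma cos_INR_PI n : cos (INR n * PI) = (-1) ^ n.
Proof.
  induction n as [|n IH]; [simpl; rewrite Rmult_0_l; apply cos_0|].
  rewrite S_INR, Rmult_plus_distr_r, Rmult_1_l, cos_plus, IH, sin_PI, cos_PI; simpl; ring.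
Qed.

Lemma is_derive_cos_mult (k : R) x : is_derive (fun x => cos (k * x)) x (- (k * sin (k * x))).
Proof. auto_derive; auto; ring. Qed.

Lemma continuous_cos_mult (k : R) x : continuous (fun x => cos (k * x)) x.
Proof. eapply continuous_of_is_derive, is_derive_cos_mult. Qed.

Lemma is_derive_dirichlet N x :
  is_derive (dirichlet N) x (- sum_f_R0 (fun k => INR k * sin (INR k * x)) N).
Proof.
  induction N as [|N IH].
  - eapply is_derive_eq; [apply is_derive_const_R | simpl; ring].
  - eapply is_derive_eq; [apply is_derive_plus_R; [apply IH|]|].
    + apply is_derive_cos_mult.
    + rewrite tech5; ring.
Qed.

Lemma continuous_dirichlet N x : continuous (dirichlet N) x.
Proof. eapply continuous_of_is_derive, is_derive_dirichlet. Qed.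

Lemma RInt_cos_mult k : 0 < k -> (RInt (fun x => cos (k * x)) 0 PI : R) = sin (k * PI) / k.
Proof.
  intros Hk; pose proof PI_RGT_0.
  rewrite (RInt_of_is_derive _ (fun x => sin (k * x) / k));
    [| lra | | intros; apply continuous_cos_mult].
  - rewrite Rmult_0_r, sin_0; field; lra.
  - intros x _; auto_derive; [lra | field; lra].
Qed.

Lemma RInt_dirichlet N : (RInt (dirichlet N) 0 PI : R) = PI / 2.
Proof.
  pose proof PI_RGT_0; induction N as [|N IH].
  - simpl; rewrite RInt_const; unfold scal; simpl; unfold mult; simpl; field.
  - cbn [dirichlet].
    rewrite (RInt_plus (V := R_CompleteNormedModule) (dirichlet N) (fun x => cos (INR (S N) * x)))
      by (apply ex_RInt_of_continuous; [lra | intros; try apply continuous_dirichlet;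
                                              apply continuous_cos_mult]).
    change (plus ?u ?v) with (Rplus u v); rewrite IH.
    assert (0 < INR (S N)) by (apply lt_0_INR; lia).
    rewrite RInt_cos_mult, sin_INR_PI by lra; field; lra.
Qed.

Section CosDirichlet.
Variable a : R.
Hypothesis Ha : 0 < a < 1.

Lemma continuous_cos_mult_dirichlet N x : continuous (fun x => cos (a * x) * dirichlet N x) x.
Proof.
  apply continuous_of_ex_derive; eexists.
  apply is_derive_mult_R; [apply is_derive_cos_mult | apply is_derive_dirichlet].
Qed.

Lemma RInt_cos_mult_cos k : 1 <= k ->
  (RInt (fun x => cos (a * x) * cos (k * x)) 0 PI : R) =
  sin (a * PI) * cos (k * PI) * (a / (a * a - k * k))
  + cos (a * PI) * sin (k * PI) * (k / (k * k - a * a)).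
Proof.
  intros Hk; pose proof PI_RGT_0.
  rewrite (RInt_of_is_derive _ (fun x => sin ((a + k) * x) / (2 * (a + k))
                                       + sin ((a - k) * x) / (2 * (a - k)))); [| lra | |].
  - rewrite !Rmult_0_r, sin_0, Rmult_plus_distr_r, Rmult_minus_distr_r, sin_plus, sin_minus.
    field; repeat split; nra.
  - intros x _; auto_derive; [repeat split; lra|].
    replace ((a + k) * x) with (a * x + k * x) by ring.
    replace ((a - k) * x) with (a * x - k * x) by ring.
    rewrite cos_plus, cos_minus; field; lra.
  - intros x _; apply continuous_of_ex_derive; auto_derive; auto.
Qed.

Lemma RInt_cos_mult_dirichlet N :
  (RInt (fun x => cos (a * x) * dirichlet N x) 0 PI : R) = sin (a * PI) / 2 * cosec_partial_sum a N.
Proof.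
  pose proof PI_RGT_0; induction N as [|N IH].
  - simpl; rewrite (RInt_of_is_derive _ (fun x => sin (a * x) / (2 * a))); [| lra | |].
    + rewrite Rmult_0_r, sin_0; field; lra.
    + intros x _; auto_derive; [lra | field; lra].
    + intros x _; apply continuous_of_ex_derive; auto_derive; auto.
  - cbn [dirichlet cosec_partial_sum].
    rewrite (RInt_ext _ (fun x => cos (a * x) * dirichlet N x + cos (a * x) * cos (INR (S N) * x)))
      by (intros; apply Rmult_plus_distr_l).
    rewrite (RInt_plus (V := R_CompleteNormedModule));
      [| apply ex_RInt_of_continuous; [lra | intros; apply continuous_cos_mult_dirichlet]
       | apply ex_RInt_of_continuous; [lra | intros x _; apply continuous_of_ex_derive;
                                              auto_derive; auto]].
    change (plus ?u ?v) with (Rplus u v); rewrite IH.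
    assert (1 <= INR (S N)) by (rewrite S_INR; pose proof (pos_INR N); lra).
    rewrite RInt_cos_mult_cos, sin_INR_PI, cos_INR_PI by lra; field; nra.
Qed.

End CosDirichlet.

Lemma continuous_sin_mult (k : R) x : continuous (fun x => sin (k * x)) x.
Proof. apply continuous_of_ex_derive; auto_derive; auto. Qed.

Lemma Rabs_mult_sin_le x y B : Rabs x <= B -> Rabs (x * sin y) <= B.
Proof.
  intros Hx; rewrite Rabs_mult.
  assert (Rabs (sin y) <= 1) by (apply Rabs_le, SIN_bound).
  pose proof (Rabs_pos x); pose proof (Rabs_pos (sin y)); nra.
Qed.

(* Shifting by half a period d = PI/M flips the sign of sin (M x). *)
Lemma RInt_sin_half_period_shift (h : R -> R) L M : 0 < M -> PI / M <= L ->
  (forall x, 0 <= x <= L -> continuous h x) ->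
  2 * RInt (fun x => h x * sin (M * x)) 0 L =
    RInt (fun x => h x * sin (M * x)) 0 (PI / M)
    + RInt (fun x => h x * sin (M * x)) (L - PI / M) L
    + RInt (fun x => (h x - h (x + PI / M)) * sin (M * x)) 0 (L - PI / M).
Proof.
  intros HM HdL Hh; pose proof PI_RGT_0.
  set (d := PI / M) in *; assert (Hd : 0 < d) by (apply Rdiv_lt_0_compat; lra).
  set (phi := fun x => h x * sin (M * x)).
  set (psi := fun x => h (x + d) * sin (M * x)).
  assert (Ex : forall u v, 0 <= u <= v -> v <= L -> ex_RInt phi u v).
  { intros u v Huv HvL; apply ex_RInt_of_continuous; [lra|]; intros x Hx.
    apply (continuous_mult (K := R_AbsRing)); [apply Hh; lra | apply continuous_sin_mult]. }
  assert (Expsi : ex_RInt psi 0 (L - d)).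
  { apply ex_RInt_of_continuous; [lra|]; intros x Hx.
    apply (continuous_mult (K := R_AbsRing)); [|apply continuous_sin_mult].
    apply (continuous_comp (fun x => x + d) h); [apply continuous_of_ex_derive; auto_derive; auto|].
    apply Hh; lra. }
  assert (Eshift : RInt phi d L = - RInt psi 0 (L - d)).
  { pose proof (RInt_comp_lin (V := R_CompleteNormedModule) phi 1 d 0 (L - d)) as H1.
    replace (1 * 0 + d) with d in H1 by ring; replace (1 * (L - d) + d) with L in H1 by ring.
    rewrite <- H1, <- (RInt_opp (V := R_CompleteNormedModule)) by (auto; apply Ex; lra).
    apply RInt_ext; intros x _; unfold phi, psi, scal; simpl; unfold mult; simpl.
    replace (M * (1 * x + d)) with (M * x + PI) by (unfold d; field; lra).
    rewrite neg_sin, !Rmult_1_l, Rplus_comm; unfold opp; simpl; ring. }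
  assert (Ediff : RInt phi 0 (L - d) - RInt psi 0 (L - d)
                  = RInt (fun x => (h x - h (x + d)) * sin (M * x)) 0 (L - d)).
  { rewrite <- (RInt_minus (V := R_CompleteNormedModule)) by (auto; apply Ex; lra).
    apply RInt_ext; intros x _; unfold minus, plus, opp, phi, psi; simpl; ring. }
  change (2 * RInt phi 0 L = RInt phi 0 d + RInt phi (L - d) L
    + RInt (fun x => (h x - h (x + d)) * sin (M * x)) 0 (L - d)).
  rewrite <- Ediff, <- Rplus_diag.
  rewrite <- (RInt_Chasles (V := R_CompleteNormedModule) phi 0 d L) at 1 by (apply Ex; lra).
  rewrite <- (RInt_Chasles (V := R_CompleteNormedModule) phi 0 (L - d) L) by (apply Ex; lra).
  rewrite Eshift; unfold plus; simpl; ring.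
Qed.

Lemma Rabs_RInt_mult_sin_le (h : R -> R) L M B eta : 0 < M -> PI / M <= L ->
  (forall x, 0 <= x <= L -> continuous h x) ->
  (forall x, 0 <= x <= L -> Rabs (h x) <= B) ->
  (forall x, 0 <= x <= L - PI / M -> Rabs (h x - h (x + PI / M)) <= eta) ->
  Rabs (RInt (fun x => h x * sin (M * x)) 0 L) <= PI / M * B + L * eta / 2.
Proof.
  intros HM HdL Hcont HB Heta; pose proof PI_RGT_0.
  assert (Hd : 0 < PI / M) by (apply Rdiv_lt_0_compat; lra).
  pose proof (RInt_sin_half_period_shift h L M HM HdL Hcont) as E; set (d := PI / M) in *.
  assert (Ex : forall u v, 0 <= u <= v -> v <= L ->
    Rabs (RInt (fun x => h x * sin (M * x)) u v) <= (v - u) * B).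
  { intros u v Huv HvL; apply abs_RInt_le_const; [lra| |].
    - apply ex_RInt_of_continuous; [lra|]; intros x Hx.
      apply (continuous_mult (K := R_AbsRing)); [apply Hcont; lra | apply continuous_sin_mult].
    - intros t Ht; apply Rabs_mult_sin_le, HB; lra. }
  assert (Ediff : Rabs (RInt (fun x => (h x - h (x + d)) * sin (M * x)) 0 (L - d))
                  <= (L - d - 0) * eta).
  { apply abs_RInt_le_const; [lra| |].
    - apply ex_RInt_of_continuous; [lra|]; intros x Hx.
      apply (continuous_mult (K := R_AbsRing)); [|apply continuous_sin_mult].
      apply (continuous_minus (K := R_AbsRing) h (fun x => h (x + d))); [apply Hcont; lra|].
      apply (continuous_comp (fun x => x + d) h);
        [apply continuous_of_ex_derive; auto_derive; auto | apply Hcont; lra].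
    - intros t Ht; apply Rabs_mult_sin_le, Heta; lra. }
  pose proof (Ex 0 d ltac:(lra) ltac:(lra)); pose proof (Ex (L - d) L ltac:(lra) ltac:(lra)).
  assert (0 <= eta) by (eapply Rle_trans; [apply Rabs_pos | apply (Heta 0); lra]).
  assert (Htwice : Rabs (2 * RInt (fun x => h x * sin (M * x)) 0 L) <= 2 * d * B + L * eta).
  { rewrite E; eapply Rle_trans; [apply Rabs_triang|].
    eapply Rle_trans; [apply Rplus_le_compat_r, Rabs_triang | nra]. }
  rewrite Rabs_mult, Rabs_pos_eq in Htwice by lra; lra.
Qed.

Lemma riemann_lebesgue_sin (h : R -> R) L : 0 < L ->
  (forall x, 0 <= x <= L -> continuity_pt h x) ->
  forall eps, 0 < eps -> exists M0, forall M, M0 <= M ->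
    Rabs (RInt (fun x => h x * sin (M * x)) 0 L) <= eps.
Proof.
  intros HL Hc eps Heps; pose proof PI_RGT_0.
  destruct (continuity_ab_maj (fun x => Rabs (h x)) 0 L) as [c [Hc1 Hc2]]; [lra| |].
  { intros x Hx; apply (continuity_pt_comp h Rabs); [auto | apply Rcontinuity_abs]. }
  set (B := Rabs (h c) + 1).
  assert (HB0 : 0 < B) by (unfold B; pose proof (Rabs_pos (h c)); lra).
  assert (Heta : 0 < eps / L) by (apply Rdiv_lt_0_compat; lra).
  destruct (Heine_cor2 Hc (mkposreal _ Heta)) as [delta Hdelta]; simpl in Hdelta.
  pose proof (cond_pos delta).
  set (d1 := Rmin (Rmin (delta / 2) (eps / (2 * B))) L).
  assert (Hd1 : 0 < d1) by (repeat apply Rmin_pos; try apply Rdiv_lt_0_compat; lra).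
  assert (Hd1d : d1 <= delta / 2) by (unfold d1; eapply Rle_trans; apply Rmin_l).
  assert (Hd1B : d1 <= eps / (2 * B))
    by (unfold d1; eapply Rle_trans; [apply Rmin_l | apply Rmin_r]).
  assert (Hd1L : d1 <= L) by apply Rmin_r.
  exists (PI / d1); intros M HM.
  assert (HM0 : 0 < M) by (eapply Rlt_le_trans; [apply Rdiv_lt_0_compat | apply HM]; lra).
  assert (Hd : 0 < PI / M <= d1).
  { split; [apply Rdiv_lt_0_compat; lra|].
    apply Rmult_le_reg_r with M; [lra|]; replace (PI / M * M) with PI by (field; lra).
    apply Rle_trans with (d1 * (PI / d1)); [right; field; lra | apply Rmult_le_compat_l; lra]. }
  eapply Rle_trans; [apply (Rabs_RInt_mult_sin_le h L M B (eps / L)); auto; try lra|].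
  - intros; apply continuity_pt_filterlim; auto.
  - intros x Hx; pose proof (Hc1 x Hx); unfold B; lra.
  - intros x Hx; apply Rlt_le, Hdelta; try lra.
    rewrite Rabs_minus_sym; replace (x + PI / M - x) with (PI / M) by ring.
    rewrite Rabs_pos_eq; lra.
  - assert (PI / M * B <= eps / 2).
    { apply Rle_trans with (eps / (2 * B) * B);
        [apply Rmult_le_compat_r; lra | right; field; lra]. }
    replace (L * (eps / L) / 2) with (eps / 2) by (field; lra); lra.
Qed.

(* The value 0 at x = 0 is the continuous extension. *)
Definition cos_sub_quot (a x : R) : R :=
  if Req_EM_T x 0 then 0 else (cos (a * x) - 1) / (2 * sin (x / 2)).

Section CosSubQuot.
Variable a : R.
Hypothesis Ha : 0 < a < 1.

Lemma Rabs_cos_sub_quot_le_pos x : 0 < x <= 1 -> Rabs (cos_sub_quot a x) <= x.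
Proof.
  intros Hx; unfold cos_sub_quot; destruct (Req_EM_T x 0); [lra|].
  assert (Hc : 1 - x * x / 2 <= cos (a * x)).
  { destruct (pre_cos_bound (a * x) 0 ltac:(nra) ltac:(nra)) as [H _].
    unfold cos_approx, cos_term in H; simpl in H.
    assert (a * x * (a * x) <= x * x) by (apply Rmult_le_compat; nra).
    lra. }
  assert (Hs : x / 4 <= sin (x / 2)).
  { pose proof PI2_1; destruct (sin_bound (x / 2) 0 ltac:(lra) ltac:(lra)) as [Hsin _].
    unfold sin_approx, sin_term in Hsin; simpl in Hsin; nra. }
  pose proof (COS_bound (a * x)).
  apply Rabs_le; split; apply Rmult_le_reg_r with (2 * sin (x / 2)); try lra;
    unfold Rdiv; rewrite Rmult_assoc, Rinv_l by lra; nra.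
Qed.

Lemma cos_sub_quot_opp x : cos_sub_quot a (- x) = - cos_sub_quot a x.
Proof.
  unfold cos_sub_quot; destruct (Req_EM_T x 0), (Req_EM_T (- x) 0); try lra.
  replace (a * - x) with (- (a * x)) by ring; replace (- x / 2) with (- (x / 2)) by field.
  rewrite cos_neg, sin_neg; unfold Rdiv; rewrite <- Ropp_mult_distr_r, Rinv_opp; ring.
Qed.

Lemma Rabs_cos_sub_quot_le x : Rabs x <= 1 -> Rabs (cos_sub_quot a x) <= Rabs x.
Proof.
  intros Hx; destruct (Rtotal_order x 0) as [Hn|[->|Hp]].
  - rewrite <- (Ropp_involutive x), cos_sub_quot_opp, !Rabs_Ropp, (Rabs_left x) in * by lra.
    apply Rabs_cos_sub_quot_le_pos; lra.
  - unfold cos_sub_quot; destruct (Req_EM_T 0 0); [rewrite Rabs_R0; lra | lra].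
  - rewrite (Rabs_pos_eq x) in * by lra; apply Rabs_cos_sub_quot_le_pos; lra.
Qed.

Lemma continuity_pt_cos_sub_quot x : 0 <= x <= PI -> continuity_pt (cos_sub_quot a) x.
Proof.
  intros Hx; destruct (Req_dec x 0) as [->|Hx0].
  - intros eps Heps; exists (Rmin 1 eps); split; [apply Rmin_pos; lra|].
    intros y [_ Hy]; simpl in *; unfold R_dist in *; rewrite Rminus_0_r in *.
    unfold cos_sub_quot at 2; destruct (Req_EM_T 0 0); [|lra]; rewrite Rminus_0_r.
    pose proof (Rmin_l 1 eps); pose proof (Rmin_r 1 eps).
    eapply Rle_lt_trans; [apply Rabs_cos_sub_quot_le|]; lra.
  - assert (Hs : 0 < sin (x / 2)) by (apply sin_gt_0; pose proof PI_RGT_0; lra).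
    apply (continuity_pt_ext_loc (fun y => (cos (a * y) - 1) / (2 * sin (y / 2)))).
    + assert (Hxp : 0 < x) by lra; exists (mkposreal x Hxp); intros y Hy.
      apply Rabs_lt_between in Hy; cbn in Hy.
      unfold cos_sub_quot; destruct (Req_EM_T y 0); [lra | reflexivity].
    + apply continuity_pt_filterlim.
      apply (continuous_of_ex_derive (fun y => (cos (a * y) - 1) / (2 * sin (y / 2)))).
      auto_derive; lra.
Qed.

Lemma RInt_cos_sub_quot_sin N :
  (RInt (fun x => cos_sub_quot a x * sin ((INR N + 1 / 2) * x)) 0 PI : R)
  = sin (a * PI) / 2 * cosec_partial_sum a N - PI / 2.
Proof.
  pose proof PI_RGT_0.
  rewrite (RInt_ext _ (fun x => cos (a * x) * dirichlet N x - dirichlet N x)).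
  - rewrite (RInt_minus (V := R_CompleteNormedModule)).
    + unfold minus, plus, opp; simpl; rewrite RInt_cos_mult_dirichlet, RInt_dirichlet by auto; ring.
    + apply ex_RInt_of_continuous; [lra | intros; apply continuous_cos_mult_dirichlet].
    + apply ex_RInt_of_continuous; [lra | intros; apply continuous_dirichlet].
  - intros x Hx; rewrite Rmin_left, Rmax_right in Hx by lra.
    assert (Hs : 0 < sin (x / 2)) by (apply sin_gt_0; lra).
    rewrite <- dirichlet_sin; unfold cos_sub_quot; destruct (Req_EM_T x 0); [lra|].
    simpl; field; lra.
Qed.

Lemma cosec_partial_sum_le_eventually eps : 0 < eps ->
  exists N0, forall N, (N0 <= N)%nat -> cosec_partial_sum a N <= PI / sin (a * PI) + eps.
Proof.
  intros Heps; pose proof PI_RGT_0.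
  assert (Hsin : 0 < sin (a * PI)) by (apply sin_gt_0; nra).
  destruct (riemann_lebesgue_sin (cos_sub_quot a) PI PI_RGT_0 continuity_pt_cos_sub_quot
              (eps * sin (a * PI) / 2)) as [M0 HM0]; [nra|].
  destruct (INR_archimed 1 M0 ltac:(lra)) as [N0 HN0].
  exists N0; intros N HN; apply le_INR in HN.
  pose proof (HM0 (INR N + 1 / 2) ltac:(lra)) as H1.
  rewrite RInt_cos_sub_quot_sin in H1; apply Rabs_le_between in H1.
  apply Rmult_le_reg_r with (sin (a * PI) / 2); [lra|].
  replace ((PI / sin (a * PI) + eps) * (sin (a * PI) / 2))
    with (PI / 2 + eps * sin (a * PI) / 2) by (field; lra).
  lra.
Qed.

End CosSubQuot.

(** * The integral of 1/(1+t^p) over [0, oo) *)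

Section ImproperIntegral.
Variable p : R.
Hypothesis Hp : 1 < p.

Let a := 1 / p.

Lemma alt_sums_cosec_partial_sum m :
  sum_f_R0 (fun n => (-1) ^ n / (INR n * p + 1)) m
  + sum_f_R0 (fun n => (-1) ^ n / (INR n * p + p - 1)) m
  = a * (cosec_partial_sum a m + (-1) ^ m / (INR m + 1 - a)).
Proof.
  pose proof (inv_p_in_01 p Hp) as Ha; fold a in Ha.
  assert (Hpa : p = / a) by (unfold a; field; lra).
  induction m as [|m IH]; [simpl; rewrite Hpa; field; lra|].
  rewrite !tech5.
  set (s1 := sum_f_R0 (fun n => (-1) ^ n / (INR n * p + 1)) m).
  set (s2 := sum_f_R0 (fun n => (-1) ^ n / (INR n * p + p - 1)) m).
  transitivity (s1 + s2
    + ((-1) ^ S m / (INR (S m) * p + 1) + (-1) ^ S m / (INR (S m) * p + p - 1))); [ring|].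
  unfold s1, s2; rewrite IH; cbn [cosec_partial_sum]; rewrite S_INR; pose proof (pos_INR m).
  replace ((-1) ^ S m) with (- (-1) ^ m) by (simpl; ring).
  rewrite Hpa; field; repeat split; nra.
Qed.

Lemma arctan_p_le_pi_div_p_sin Y : 0 <= Y -> arctan_p p Y <= PI / (p * sin (PI / p)).
Proof.
  intros HY; pose proof (inv_p_in_01 p Hp) as Ha; fold a in Ha.
  assert (HaPI : a * PI = PI / p) by (unfold a; field; lra).
  assert (Hsin : 0 < sin (PI / p)) by (rewrite <- HaPI; apply sin_gt_0; pose proof PI_RGT_0; nra).
  apply Rle_plus_epsilon; intros eps Heps.
  set (e := eps * p / 2); assert (He : 0 < e) by (unfold e; nra).
  destruct (cosec_partial_sum_le_eventually a Ha e He) as [N0 HN0].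
  destruct (INR_archimed e 1 He) as [K1 HK1].
  set (K := max N0 K1).
  pose proof (arctan_p_le_alt_sums p Hp K Y HY) as HK.
  unfold alt_sum_01, alt_sum_1oo in HK; rewrite alt_sums_cosec_partial_sum, pow_1_even in HK.
  assert (HS : cosec_partial_sum a (2 * K) <= PI / sin (a * PI) + e) by (apply HN0; unfold K; lia).
  assert (HKs : INR K1 <= INR (2 * K) + 1 - a).
  { rewrite mult_INR; assert (INR K1 <= INR K) by (apply le_INR; unfold K; lia).
    simpl; pose proof (pos_INR K); lra. }
  assert (Htail : 1 / (INR (2 * K) + 1 - a) <= e).
  { assert (0 < INR K1) by (destruct K1; [simpl in HK1; lra | apply lt_0_INR; lia]).
    apply Rmult_le_reg_r with (INR (2 * K) + 1 - a); [lra|].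
    field_simplify; [nra | lra]. }
  rewrite HaPI in HS.
  apply Rle_trans with (a * (PI / sin (PI / p) + 2 * e)).
  - eapply Rle_trans; [apply HK | apply Rmult_le_compat_l; lra].
  - right; unfold a, e; field; lra.
Qed.

End ImproperIntegral.

Section Bounds.
Variable p : R.
Hypothesis Hp : 1 < p.

Let a := 1 / p.
Let Ha : 0 < a < 1 := inv_p_in_01 p Hp.

Lemma half_pi_p : pi_p p / 2 = PI / (p * sin (PI / p)).
Proof.
  assert (0 < sin (PI / p)).
  { pose proof PI_RGT_0; apply sin_gt_0; [apply Rdiv_lt_0_compat; lra|].
    apply Rmult_lt_reg_r with p; [lra | field_simplify; nra]. }
  unfold pi_p; field; lra.
Qed.

Lemma arcsin_p_eq_arctan_p x : 0 <= x < 1 ->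
  arcsin_p p x = arctan_p p (x * Rpower (1 - rpow x p) (- a)).
Proof.
  intros Hx; set (u := rpow x p).
  assert (Hu : 0 <= u < 1) by (split; [apply rpow_ge_0 | apply rpow_lt_1; lra]).
  set (y := x * Rpower (1 - u) (- a)).
  assert (Hy : 0 <= y) by (apply Rmult_le_pos; [lra | left; apply Rpower_pos]).
  assert (Hyp : rpow y p = u / (1 - u)).
  { destruct (Req_dec x 0) as [->|Hx0].
    - unfold y, u; rewrite Rmult_0_l, !rpow_nonpos by lra; field; lra.
    - assert (Hux : u = Rpower x p) by (apply rpow_Rpower; lra).
      unfold y; rewrite rpow_Rpower by (apply Rmult_lt_0_compat; [lra | apply Rpower_pos]).
      rewrite <- Rpower_mult_distr, Rpower_mult by (try apply Rpower_pos; lra).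
      replace (- a * p) with (- (1)) by (unfold a; field; lra).
      rewrite Rpower_Ropp, Rpower_1, <- Hux by lra; field; lra. }
  rewrite arcsin_p_hyp_series, arctan_p_hyp_series, Hyp by auto; fold a u.
  replace (u / (1 - u) / (1 + u / (1 - u))) with u by (field; lra).
  replace (1 + u / (1 - u)) with (/ (1 - u)) by (field; lra).
  unfold y; rewrite (Rmult_assoc x), Rpower_mult_distr, Rinv_r, Rpower_1_l by
    (try apply Rpower_pos; try apply Rinv_0_lt_compat; lra).
  ring.
Qed.

Lemma arcsin_p_le x : 0 <= x < 1 -> arcsin_p p x <= PI / (p * sin (PI / p)).
Proof.
  intros Hx; rewrite arcsin_p_eq_arctan_p by auto.
  apply arctan_p_le_pi_div_p_sin; auto.
  apply Rmult_le_pos; [lra | left; apply Rpower_pos].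
Qed.

(* If P <= F(u), fix v in (u,1) and d = F(v) - F(u) > 0: every x with v <= x^p < 1 has
   x (F(u) + d) <= x F(x^p) = arcsin_p x <= P <= F(u), impossible for x close to 1. *)
Lemma hyp_series_lt_half_pi_p u : 0 < u < 1 -> hyp_series a u < PI / (p * sin (PI / p)).
Proof.
  intros Hu; set (P := PI / (p * sin (PI / p))).
  set (v := (1 + u) / 2); set (d := hyp_series a v - hyp_series a u).
  assert (Hd : 0 < d) by (unfold d; pose proof (hyp_series_lt_compat a Ha u v); unfold v in *; lra).
  assert (HF : 0 < hyp_series a u).
  { pose proof (hyp_series_gt_linear a Ha u Hu).
    assert (0 <= a * a / (1 + a) * u) by (apply Rmult_le_pos; [apply Rdiv_le_0_compat|]; nra).
    lra. }
  destruct (Rlt_le_dec (hyp_series a u) P) as [H|H]; auto; exfalso.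
  set (q := hyp_series a u / (hyp_series a u + d)).
  assert (Hq : 0 < q < 1).
  { unfold q; split; [apply Rdiv_lt_0_compat; lra|].
    apply Rmult_lt_reg_r with (hyp_series a u + d); [lra | field_simplify; lra]. }
  set (x := Rmax (rpow v a) ((1 + q) / 2)).
  assert (Hx : 0 < x < 1).
  { unfold x; split; [eapply Rlt_le_trans; [|apply Rmax_r]; lra|].
    apply Rmax_lub_lt; [apply rpow_lt_1; unfold v; lra | lra]. }
  assert (Hxv : v <= rpow x p).
  { unfold a; rewrite <- (rpow_inv_pow v p) at 1 by (unfold v; lra).
    apply rpow_le_compat; [split; [apply rpow_ge_0 | apply Rmax_l] | lra]. }
  assert (Hxp : rpow x p < 1) by (apply rpow_lt_1; lra).
  assert (HFx : hyp_series a u + d <= hyp_series a (rpow x p)).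
  { unfold d; destruct (Req_dec v (rpow x p)) as [<-|E]; [lra|].
    pose proof (hyp_series_lt_compat a Ha v (rpow x p)); unfold v in *; lra. }
  assert (Hbound : x * hyp_series a (rpow x p) <= P).
  { unfold a, P; rewrite <- (arcsin_p_hyp_series p Hp x) by lra; apply arcsin_p_le; lra. }
  assert (x * (hyp_series a u + d) <= hyp_series a u).
  { apply Rle_trans with (x * hyp_series a (rpow x p)); [apply Rmult_le_compat_l|]; lra. }
  assert (x <= q).
  { unfold q; apply Rmult_le_reg_r with (hyp_series a u + d); [lra | field_simplify; lra]. }
  assert ((1 + q) / 2 <= x) by apply Rmax_r.
  lra.
Qed.

Lemma arcsin_p_bounds x : 0 < x < 1 ->
  (1 + rpow x p / (p * (1 + p))) * x < arcsin_p p x /\ arcsin_p p x < pi_p p / 2 * x.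
Proof.
  intros Hx; rewrite arcsin_p_hyp_series by lra; fold a.
  pose proof (rpow_in_01 x p Hx ltac:(lra)) as Hu; split.
  - pose proof (hyp_series_gt_linear a Ha _ Hu) as HL.
    replace (a * a / (1 + a)) with (1 / (p * (1 + p))) in HL by (unfold a; field; lra).
    replace (rpow x p / (p * (1 + p))) with (1 / (p * (1 + p)) * rpow x p) by (field; lra).
    rewrite Rmult_comm; apply Rmult_lt_compat_l; lra.
  - rewrite half_pi_p, (Rmult_comm (PI / _)); apply Rmult_lt_compat_l; [lra|].
    apply hyp_series_lt_half_pi_p; auto.
Qed.

Lemma arccos_p_bounds x : 0 < x < 1 ->
  (1 + (1 - rpow x p) / (p * (1 + p))) * rpow (1 - rpow x p) (1 / p) < arccos_p p x
  /\ arccos_p p x < pi_p p / 2 * rpow (1 - rpow x p) (1 / p).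
Proof.
  intros Hx; unfold arccos_p; pose proof (rpow_in_01 x p Hx ltac:(lra)).
  pose proof (arcsin_p_bounds (rpow (1 - rpow x p) (1 / p))) as Hb.
  rewrite rpow_inv_pow in Hb by lra; apply Hb, rpow_in_01; [lra | apply Rdiv_lt_0_compat; lra].
Qed.

Lemma arctan_p_bounds x : 0 < x < 1 ->
  (p * (1 + p) * (1 + rpow x p) + rpow x p) * x
    / (p * (1 + p) * rpow (1 + rpow x p) (1 + 1 / p)) < arctan_p p x
  /\ arctan_p p x < rpow 2 (1 / p) * b_p p * rpow (rpow x p / (1 + rpow x p)) (1 / p).
Proof.
  intros Hx; rewrite arctan_p_hyp_series by lra; fold a.
  set (u := rpow x p); assert (Hu : 0 < u < 1) by (apply rpow_in_01; lra).
  set (Q := Rpower (1 + u) a); assert (HQ : 0 < Q) by apply Rpower_pos.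
  rewrite Rpower_Ropp; fold Q.
  assert (Hz : 0 < u / (1 + u) < 1 / 2).
  { split; [apply Rdiv_lt_0_compat; lra|].
    apply Rmult_lt_reg_r with (2 * (1 + u)); [lra | field_simplify; lra]. }
  split.
  - rewrite rpow_Rpower, Rpower_plus, Rpower_1 by lra; fold Q.
    pose proof (hyp_series_gt_linear a Ha (u / (1 + u)) ltac:(lra)) as HL.
    replace (a * a / (1 + a)) with (1 / (p * (1 + p))) in HL by (unfold a; field; lra).
    apply Rle_lt_trans with (x * / Q * (1 + 1 / (p * (1 + p)) * (u / (1 + u))));
      [right; field; repeat split; lra|].
    apply Rmult_lt_compat_l; [apply Rmult_lt_0_compat; [lra | apply Rinv_0_lt_compat; lra] | lra].
  - unfold b_p; fold a.
    rewrite <- Rmult_assoc, <- rpow_plus, Rplus_opp_r, rpow_Rpower, Rpower_O, Rmult_1_l by lra.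
    rewrite hyp2F1_hyp_series by lra.
    assert (Hr : rpow (u / (1 + u)) a = x * / Q).
    { rewrite rpow_Rpower by (apply Rdiv_lt_0_compat; lra); unfold Rdiv at 1.
      rewrite <- Rpower_mult_distr, <- rpow_Rpower by (try apply Rinv_0_lt_compat; lra).
      unfold u, a; rewrite rpow_pow_inv by lra; fold u a.
      unfold Q, Rpower; rewrite ln_Rinv, <- exp_Ropp by lra; f_equal; f_equal; ring. }
    rewrite Hr, (Rmult_comm (hyp_series a (1 / 2))).
    apply Rmult_lt_compat_l; [apply Rmult_lt_0_compat; [lra | apply Rinv_0_lt_compat; lra]|].
    apply hyp_series_lt_compat; auto; lra.
Qed.

End Bounds.

Theorem theorem1p1 (p : R) (hp : 1 < p) :
  forall x : R, 0 < x < 1 ->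
    ((1 + rpow x p / (p * (1 + p))) * x < arcsin_p p x
       /\ arcsin_p p x < pi_p p / 2 * x)
    /\ ((1 + (1 - rpow x p) / (p * (1 + p))) * rpow (1 - rpow x p) (1 / p)
          < arccos_p p x
       /\ arccos_p p x < pi_p p / 2 * rpow (1 - rpow x p) (1 / p))
    /\ ((p * (1 + p) * (1 + rpow x p) + rpow x p) * x
          / (p * (1 + p) * rpow (1 + rpow x p) (1 + 1 / p)) < arctan_p p x
       /\ arctan_p p x
          < rpow 2 (1 / p) * b_p p * rpow (rpow x p / (1 + rpow x p)) (1 / p)).
Proof.
  intros x Hx; split; [|split].
  - apply arcsin_p_bounds; auto.
  - apply arccos_p_bounds; auto.
  - apply arctan_p_bounds; auto.
Qed.
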